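(* For every $l\in w_{1+\infty}$, $$[\hat l^B,\phi(z)]=-\frac12\big(l_z-\iota(l_z)\big)\cdot\phi(z).$$
   Context: Neutral fermions $\{\phi_i\}_{i\in\mathbb{Z}}$ satisfy $[\phi_i,\phi_j]_+=(-1)^i\delta_{i+j,0}$, acting on the B-type Fock space generated from a vacuum $|0\rangle$ with $\phi_i|0\rangle=0$ for $i<0$; dual vacuum $\langle0|\phi_i=0$ for $i>0$, vacuum expectation with $\langle0|0\rangle=1$, $\langle0|\phi_0|0\rangle=0$. $\phi(z)=\sum_{i\in\mathbb{Z}}\phi_iz^i$; $:\!\phi_i\phi_j\!:\,=\phi_i\phi_j-\langle0|\phi_i\phi_j|0\rangle$. $w_{1+\infty}=\mathrm{span}_{\mathbb{C}}\{z^i\partial_z^j\}$, with involution $\iota(z^k(z\partial_z)^m)=(-z\partial_z)^m(-z)^k$ extended linearly. The B-type realization of $l\in w_{1+\infty}$ is $\hat l^B=\frac12\mathrm{Res}_w\,w^{-1}:\!\phi(z)\,(l_w\cdot\phi(w))\!:\big|_{z=-w}$. *)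

From HB Require Import structures.
From mathcomp Require Import all_boot all_order all_algebra.
From mathcomp Require Import finmap.
From mathcomp Require Import monalg.
From Stdlib Require Import ClassicalEpsilon.

Set Implicit Arguments.
Unset Strict Implicit.
Unset Printing Implicit Defensive.
Import Order.TTheory GRing.Theory Num.Theory.
Local Open Scope ring_scope.
Local Open Scope fset_scope.

(* Basis states of the B-type Fock space:  a finite set S = {s1>...>sk} of   *)
(* natural numbers stands for  phi_{s1} ... phi_{sk} |0>.                    *)
Definition state := {fset nat}.

Definition fock (R : numFieldType) := {malg R[state]}.

Definition vac (R : numFieldType) : fock R := << (fset0 : state) >>.

Definition nabove (p : nat) (S : state) : nat := #|` [fset s in S | (p < s)%N]|.

(*  - n = p >= 0 : phi_p creates p (sign from anticommuting past larger       *)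
(*    indices); if p is already present the result is 0 when p > 0 (phi_p^2=0)*)
(*    and (1/2) times the state with 0 removed when p = 0 (phi_0^2 = 1/2).   *)
(*  - n = -p < 0 : phi_{-p} annihilates p, with {phi_{-p}, phi_p} = (-1)^p.  *)
Definition phiB (R : numFieldType) (n : int) (S : state) : fock R :=
  match n with
  | Posz p =>
      if p \notin S then (-1) ^+ nabove p S *: << p |` S >>
      else if p == 0%N then ((-1) ^+ nabove p S / 2) *: << S `\ p >>
      else 0
  | Negz q =>
      let p := q.+1 in
      if p \in S then ((-1) ^+ nabove p S * (-1) ^+ p) *: << S `\ p >>
      else 0
  end.

Definition phi (R : numFieldType) (n : int) (v : fock R) : fock R :=
  \sum_(S <- msupp v) v@_S *: phiB R n S.

Definition vev (R : numFieldType) (X : fock R -> fock R) : R :=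
  (X (vac R))@_(fset0 : state).

Definition nord (R : numFieldType) (i j : int) (v : fock R) : fock R :=
  phi i (phi j v) - vev (fun w => phi i (phi j w)) *: v.

Definition comm (R : numFieldType) (A B : fock R -> fock R) (v : fock R) :=
  A (B v) - B (A v).

Definition zsum_spec (V : zmodType) (f : int -> V) (v : V) : Prop :=
  exists N : nat, forall M : nat, (N <= M)%N ->
    \sum_(t < (2 * M).+1) f (t%:Z - M%:Z) = v.

Definition zsum (V : zmodType) (f : int -> V) : V :=
  epsilon (inhabits 0) (zsum_spec f).

(* Elements of w_{1+infty}: finite linear combinations                       *)
(*   l = sum_{(c,k,m) in l} c * z^k (z d_z)^m ,   k in Z, m in N,            *)
(* (this family spans w_{1+infty} = span{z^i d_z^j}).                        *)
Definition winf (R : numFieldType) := seq (R * int * nat).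

(* coefficient of z^n in  l_z . z^i :  z^k (z d_z)^m z^i = i^m z^(i+k). *)
Definition wact (R : numFieldType) (l : winf R) (i n : int) : R :=
  \sum_(x <- l) (x.1.1 * (n == i + x.1.2)%:R * (i%:~R) ^+ x.2).

(* coefficient of z^n in  iota(l_z) . z^i, where iota is linear with         *)
(* iota(z^k (z d_z)^m) = (-z d_z)^m (-z)^k, and                               *)
(* (-z d_z)^m (-z)^k z^i = (-1)^k (-(i+k))^m z^(i+k).                        *)
Definition iota_act (R : numFieldType) (l : winf R) (i n : int) : R :=
  \sum_(x <- l) (x.1.1 * (n == i + x.1.2)%:R *
                  ((-1) ^+ `|x.1.2|%N * (- (i + x.1.2)%:~R) ^+ x.2)).

(*  hat l^B = 1/2 Res_w w^{-1} :phi(z) (l_w . phi(w)):|_{z=-w}                 *)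
(*          = 1/2 sum_{i,j} [coeff of w^{-1} in w^{-1} (-w)^j (l_w . w^i)]     *)
(*                 :phi_j phi_i:                                               *)
(*          = 1/2 sum_{i,j} (-1)^j (coeff of w^{-j} in l_w . w^i) :phi_j phi_i: *)
Definition hatB (R : numFieldType) (l : winf R) (v : fock R) : fock R :=
  2^-1 *: zsum (fun i : int =>
            zsum (fun j : int => ((-1) ^+ `|j|%N * wact l i (- j)) *: nord j i v)).

(* coefficient of z^n in  -1/2 (l_z - iota(l_z)) . phi(z)                      *)
(*   = -1/2 sum_i (coeff of z^n in (l - iota l) . z^i) phi_i                    *)
Definition rhs (R : numFieldType) (l : winf R) (n : int) (v : fock R) : fock R :=
  - (2^-1 *: zsum (fun i : int => (wact l i n - iota_act l i n) *: phi i v)).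

(* The anticommutation relation phi_i phi_n + phi_n phi_i = (-1)^i delta_(i+n,0) gives
   [:phi_j phi_i:, phi_n] = (-1)^i delta_(i+n,0) phi_j - (-1)^j delta_(j+n,0) phi_i.
   Summed against the coefficients of hat l^B, the first delta selects i = -n and yields
   the iota(l_z) part, the second selects j = -n and yields the l_z part.  On a fixed
   vector every sum over Z is finite: the vector is killed by phi_(-q) for q large and
   the coefficients of l vanish off a band |i + j| <= deg l, so all symmetric partial
   sums stabilise and the computation takes place in a large enough window [-N, N]. *)

From HB Require Import structures.
From mathcomp Require Import all_boot all_order all_algebra.
From mathcomp Require Import finmap.
From mathcomp Require Import monalg.
From mathcomp Require Import zify ring.
From Stdlib Require Import ClassicalEpsilon.
Import GRing.Theory Num.Theory.
Set Implicit Arguments.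
Unset Strict Implicit.
Unset Printing Implicit Defensive.
Local Open Scope ring_scope.

Lemma signr_sq (R : pzRingType) k : (-1) ^+ k * (-1) ^+ k = 1 :> R.
Proof. by have := signrMK k (1 : R); rewrite mulr1. Qed.

Lemma odd_absD (a b : int) : odd `|a + b| = odd `|a| (+) odd `|b|.
Proof.
have oddE m : odd m = (m %% 2 == 1)%N by rewrite modn2; case: (odd m).
by rewrite !oddE; do 3!case: eqP => ? //=; lia.
Qed.

Lemma signr_absD (R : pzRingType) (a b : int) :
  (-1) ^+ `|a + b| = (-1) ^+ `|a| * (-1) ^+ `|b| :> R.
Proof. by rewrite -signr_odd odd_absD signr_addb !signr_odd. Qed.

Definition zrange (M : nat) : seq int := [seq t%:Z - M%:Z | t <- iota 0 (2 * M).+1].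

Lemma mem_zrange M i : (i \in zrange M) = (`|i| <= M)%N.
Proof.
apply/mapP/idP => [[t]|hi]; first by rewrite mem_iota => /andP[_ ht] ->; lia.
by exists (absz (i + M%:Z)); [rewrite mem_iota|]; lia.
Qed.

Lemma zrange_uniq M : uniq (zrange M).
Proof. by rewrite map_inj_uniq ?iota_uniq // => x y /addIr []. Qed.

Lemma big_zrange (V : zmodType) (f : int -> V) M :
  \sum_(t < (2 * M).+1) f (t%:Z - M%:Z) = \sum_(i <- zrange M) f i.
Proof. by rewrite big_map -(big_mkord xpredT (fun t => f (t%:Z - M%:Z))) /index_iota subn0. Qed.

Lemma eq_big_uniq_supp (V : zmodType) (I : eqType) (f : I -> V) (s s' : seq I) :
  uniq s -> uniq s' -> (forall i, f i != 0 -> (i \in s) = (i \in s')) ->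
  \sum_(i <- s) f i = \sum_(i <- s') f i.
Proof.
move=> us us' ss'.
have nz_part t : \sum_(i <- t) f i = \sum_(i <- t | f i != 0) f i.
  by rewrite [RHS]big_mkcond; apply: eq_bigr => i _; case: eqP.
rewrite (nz_part s) (nz_part s') -[LHS]big_filter -[RHS]big_filter.
apply/perm_big/uniq_perm.
- exact: filter_uniq.
- exact: filter_uniq.
by move=> i; rewrite !mem_filter; case: (boolP (f i != 0)) => // /ss' ->.
Qed.

Section SymmetricSums.
Variables (V : zmodType) (f : int -> V) (N : nat).
Hypothesis f_supp : forall i, (N < `|i|)%N -> f i = 0.

Lemma big_zrange_widen M : (N <= M)%N ->
  \sum_(i <- zrange M) f i = \sum_(i <- zrange N) f i.
Proof.
move=> NM; apply: eq_big_uniq_supp; rewrite ?zrange_uniq // => i.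
by rewrite !mem_zrange; case: (leqP `|i| N) => [|/f_supp->]; rewrite ?eqxx //; lia.
Qed.

Lemma zsum_zrange M : (N <= M)%N -> zsum f = \sum_(i <- zrange M) f i.
Proof.
move=> NM; rewrite big_zrange_widen //.
have spec : zsum_spec f (\sum_(i <- zrange N) f i).
  by exists N => M' NM'; rewrite big_zrange big_zrange_widen.
rewrite /zsum; have [N' hN'] := epsilon_spec (inhabits 0) _ (ex_intro _ _ spec).
by rewrite -(hN' (maxn N N')) ?leq_maxr // big_zrange big_zrange_widen ?leq_maxl.
Qed.

End SymmetricSums.

Section PhiLinear.
Variable R : numFieldType.
Implicit Types (u v : fock R) (S : state).

Lemma phiEw n v (X : seq state) : uniq X -> {subset msupp v <= X} ->
  phi n v = \sum_(S <- X) v@_S *: phiB R n S.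
Proof.
move=> uX vX; apply: eq_big_uniq_supp => // S.
by case: msuppP => [/vX ->|]; rewrite ?scale0r ?eqxx.
Qed.

Lemma phi_is_linear n : linear (@phi R n).
Proof.
move=> a u v; set X := enum_fset (msupp u `|` msupp v `|` msupp (a *: u + v))%fset.
have sub w : {subset msupp w <= X} -> phi n w = \sum_(S <- X) w@_S *: phiB R n S.
  exact/phiEw/fset_uniq.
rewrite !sub; try by move=> S; rewrite !inE => ->; rewrite ?orbT.
rewrite scaler_sumr -big_split; apply: eq_bigr => S _ /=.
by rewrite mcoeffD mcoeffZ scalerDl scalerA.
Qed.

HB.instance Definition _ n :=
  GRing.isLinear.Build R (fock R) (fock R) _ (@phi R n) (phi_is_linear n).

Lemma phiZ n (a : R) u : phi n (a *: u) = a *: phi n u.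
Proof. exact: linearZ. Qed.

Lemma phi_sub n u v : phi n (u - v) = phi n u - phi n v.
Proof. exact: linearB. Qed.

Lemma phiU n S : phi n << S >> = phiB R n S.
Proof. by rewrite /phi msuppU oner_eq0 big_seq_fset1 mcoeffUU scale1r. Qed.

Lemma phiUZ n (a : R) S : phi n (a *: << S >>) = a *: phiB R n S.
Proof. by rewrite phiZ phiU. Qed.

Lemma phi_sum n (I : Type) (r : seq I) (F : I -> fock R) :
  phi n (\sum_(i <- r) F i) = \sum_(i <- r) phi n (F i).
Proof. exact: linear_sum. Qed.

End PhiLinear.

Lemma nabove_fsetU1 p q S : q \notin S ->
  nabove p (q |` S)%fset = (nabove p S + (p < q))%N.
Proof.
move=> qS; rewrite /nabove; case: ltnP => [pq|qp].
  have -> : [fset s in (q |` S)%fset | (p < s)%N]%fset =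
            (q |` [fset s in S | (p < s)%N])%fset.
    by apply/fsetP => x; rewrite !inE; case: eqVneq => [->|].
  by rewrite cardfsU1 !inE (negbTE qS) addnC.
suff -> : [fset s in (q |` S)%fset | (p < s)%N]%fset = [fset s in S | (p < s)%N]%fset.
  by rewrite addn0.
apply/fsetP => x; rewrite !inE; case: eqVneq => [->|] //=.
by rewrite (negbTE qS) ltnNge qp.
Qed.

Lemma nabove_fsetD1 p q S : q \in S ->
  nabove p S = (nabove p (S `\ q)%fset + (p < q))%N.
Proof. by move=> qS; rewrite -{1}(fsetD1K qS) nabove_fsetU1 // !inE eqxx. Qed.

Lemma fsetU1D1 (a b : nat) (S : state) : a != b ->
  (a |` (S `\ b))%fset = ((a |` S) `\ b)%fset.
Proof.
by move=> ab; apply/fsetP => x; rewrite !inE; case: (eqVneq x a) => [->|] //=; rewrite ab.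
Qed.

Lemma fsetD1C (a b : nat) (S : state) : ((S `\ a) `\ b)%fset = ((S `\ b) `\ a)%fset.
Proof. by apply/fsetP => x; rewrite !inE andbCA. Qed.

Section BasisAction.
Variable R : numFieldType.
Implicit Types S : state.
Local Notation sg p S := ((-1) ^+ nabove p S : R).

Lemma sg_fsetU1 p q S : q \notin S -> sg p (q |` S)%fset = (-1) ^+ (p < q) * sg p S.
Proof. by move=> qS; rewrite nabove_fsetU1 // exprD mulrC. Qed.

Lemma sg_fsetD1 p q S : q \in S -> sg p (S `\ q)%fset = (-1) ^+ (p < q) * sg p S.
Proof. by move=> qS; rewrite (nabove_fsetD1 p qS) exprD mulrCA signr_sq mulr1. Qed.

Lemma phiB_create p S : p \notin S -> phiB R (Posz p) S = sg p S *: << (p |` S)%fset >>.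
Proof. by move=> pS; rewrite /phiB pS. Qed.

Lemma phiB_create0 S : 0%N \in S -> phiB R (Posz 0) S = (sg 0%N S / 2) *: << (S `\ 0%N)%fset >>.
Proof. by move=> S0; rewrite /phiB S0. Qed.

Lemma phiB_create_eq0 p S : p \in S -> p != 0%N -> phiB R (Posz p) S = 0.
Proof. by move=> pS /negbTE p0; rewrite /phiB pS /= p0. Qed.

Lemma phiB_annihilate q S : q.+1 \in S ->
  phiB R (Negz q) S = (sg q.+1 S * (-1) ^+ q.+1) *: << (S `\ q.+1)%fset >>.
Proof. by move=> qS; rewrite /phiB qS. Qed.

Lemma phiB_annihilate_eq0 q S : q.+1 \notin S -> phiB R (Negz q) S = 0.
Proof. by move=> /negbTE qS; rewrite /phiB qS. Qed.

Definition acomm (i j : int) : R := if i + j == 0 then (-1) ^+ `|i| else 0.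

Lemma acomm_eq0 i j : i + j != 0 -> acomm i j = 0 :> R.
Proof. by rewrite /acomm => /negbTE ->. Qed.

Lemma phiB_anticomm_same p S :
  phi (Posz p) (phiB R (Posz p) S) *+ 2 = acomm (Posz p) (Posz p) *: << S >>.
Proof.
have half_sq k : (-1) ^+ k / 2 * (-1) ^+ k *+ 2 = 1 :> R.
  by rewrite mulrAC signr_sq mul1r -mulr_natr mulVf ?pnatr_eq0.
case: (eqVneq p 0%N) => [->|p0]; last first.
  rewrite acomm_eq0 ?scale0r; last lia.
  case: (boolP (p \in S)) => pS; first by rewrite phiB_create_eq0 // linear0 mul0rn.
  by rewrite phiB_create // phiUZ phiB_create_eq0 ?fset1U1 // scaler0 mul0rn.
rewrite (_ : acomm 0 0 = 1) // scale1r; case: (boolP (0%N \in S)) => S0.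
  rewrite phiB_create0 // phiUZ phiB_create ?fsetD11 // fsetD1K // scalerA.
  by rewrite (sg_fsetD1 0 S0) /= mul1r scalerMnl half_sq scale1r.
rewrite phiB_create // phiUZ phiB_create0 ?fset1U1 // fsetU1K // scalerA.
by rewrite (sg_fsetU1 0 S0) /= mul1r mulrC scalerMnl half_sq scale1r.
Qed.

Lemma phiB_anticomm_pos_mixed p p' S : p \in S -> p' \notin S -> p != p' ->
  phi (Posz p) (phiB R (Posz p') S) + phi (Posz p') (phiB R (Posz p) S) = 0.
Proof.
move=> pS p'S pp'; rewrite (phiB_create p'S) phiUZ.
have pp'S : p \in (p' |` S)%fset by rewrite !inE pS orbT.
case: (eqVneq p 0%N) => [p0|p0]; last first.
  by rewrite (phiB_create_eq0 pS p0) linear0 addr0 (phiB_create_eq0 pp'S p0) scaler0.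
subst p; have p'0 : p' != 0%N by rewrite eq_sym.
have p'S0 : p' \notin (S `\ 0%N)%fset by rewrite !inE (negbTE p'S) andbF.
rewrite (phiB_create0 pS) phiUZ (phiB_create0 pp'S) (phiB_create p'S0) !scalerA.
rewrite (fsetU1D1 _ p'0) (sg_fsetU1 0%N p'S) (sg_fsetD1 p' pS) -scalerDl.
rewrite [_ + _](_ : _ = 0) ?scale0r //.
by rewrite lt0n p'0 /= expr1 expr0; ring.
Qed.

Lemma phiB_anticomm_pos p p' S : p != p' ->
  phi (Posz p) (phiB R (Posz p') S) + phi (Posz p') (phiB R (Posz p) S) = 0.
Proof.
move=> pp'; case: (boolP (p \in S)) => pS; case: (boolP (p' \in S)) => p'S.
- wlog p0 : p p' pS p'S pp' / p != 0%N.
    move=> wlog_p0; case: (eqVneq p 0%N) => [p0|]; last exact: wlog_p0.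
    by rewrite addrC wlog_p0 // eq_sym -?p0.
  rewrite (phiB_create_eq0 pS p0) linear0 addr0.
  case: (eqVneq p' 0%N) => [p'0|p'0]; last by rewrite (phiB_create_eq0 p'S p'0) linear0.
  subst p'; by rewrite (phiB_create0 p'S) phiUZ phiB_create_eq0 ?scaler0 // !inE pS p0.
- exact: phiB_anticomm_pos_mixed.
- by rewrite addrC phiB_anticomm_pos_mixed // eq_sym.
have pp'S : p \notin (p' |` S)%fset by rewrite !inE negb_or pp' pS.
have p'pS : p' \notin (p |` S)%fset by rewrite !inE negb_or eq_sym pp' p'S.
rewrite (phiB_create pS) (phiB_create p'S) !phiUZ (phiB_create pp'S) (phiB_create p'pS).
rewrite !scalerA fsetUCA (sg_fsetU1 p p'S) (sg_fsetU1 p' pS) -scalerDl.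
rewrite [_ + _](_ : _ = 0) ?scale0r //.
case: (ltngtP p p') => h; last by move/eqP: pp'.
all: by rewrite /= ?expr1 ?expr0; ring.
Qed.

Lemma phiB_anticomm_pos_neg_eq q S :
  phi (Posz q.+1) (phiB R (Negz q) S) + phi (Negz q) (phiB R (Posz q.+1) S) =
  (-1) ^+ q.+1 *: << S >>.
Proof.
case: (boolP (q.+1 \in S)) => qS.
  have qSq : q.+1 \notin (S `\ q.+1)%fset by rewrite fsetD11.
  rewrite (phiB_annihilate qS) phiUZ (phiB_create_eq0 qS) // linear0 addr0.
  rewrite (phiB_create qSq) (fsetD1K qS) scalerA (sg_fsetD1 q.+1 qS).
  by rewrite ltnn expr0 mul1r mulrAC signr_sq mul1r.
have qqS : q.+1 \in (q.+1 |` S)%fset by rewrite fset1U1.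
rewrite (phiB_annihilate_eq0 qS) linear0 add0r (phiB_create qS) phiUZ.
rewrite (phiB_annihilate qqS) (fsetU1K qS) scalerA (sg_fsetU1 q.+1 qS).
by rewrite ltnn expr0 mul1r mulrA signr_sq mul1r.
Qed.

Lemma phiB_anticomm_pos_neg p q S : p != q.+1 ->
  phi (Posz p) (phiB R (Negz q) S) + phi (Negz q) (phiB R (Posz p) S) = 0.
Proof.
move=> pq; case: (boolP (q.+1 \in S)) => qS; last first.
  rewrite (phiB_annihilate_eq0 qS) linear0 add0r.
  case: (boolP (p \in S)) => pS; last first.
    by rewrite (phiB_create pS) phiUZ phiB_annihilate_eq0 ?scaler0 // !inE negb_or eq_sym pq.
  case: (eqVneq p 0%N) => [p0|p0]; last by rewrite (phiB_create_eq0 pS p0) linear0.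
  subst p; rewrite (phiB_create0 pS) phiUZ phiB_annihilate_eq0 ?scaler0 //.
  by rewrite !inE (negbTE qS) andbF.
rewrite (phiB_annihilate qS) phiUZ.
case: (boolP (p \in S)) => pS.
  case: (eqVneq p 0%N) => [p0|p0]; last first.
    by rewrite (phiB_create_eq0 pS p0) linear0 addr0 phiB_create_eq0 ?scaler0 // !inE pq.
  subst p; have S0q : 0%N \in (S `\ q.+1)%fset by rewrite !inE pS.
  have Sq0 : q.+1 \in (S `\ 0%N)%fset by rewrite !inE qS.
  rewrite (phiB_create0 pS) phiUZ (phiB_create0 S0q) (phiB_annihilate Sq0) !scalerA.
  rewrite fsetD1C (sg_fsetD1 0%N qS) (sg_fsetD1 q.+1 pS) -scalerDl.
  rewrite [_ + _](_ : _ = 0) ?scale0r //.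
  by rewrite /= expr1 expr0; ring.
have pSq : p \notin (S `\ q.+1)%fset by rewrite !inE (negbTE pS) andbF.
have qpS : q.+1 \in (p |` S)%fset by rewrite !inE qS orbT.
rewrite (phiB_create pSq) (phiB_create pS) phiUZ (phiB_annihilate qpS) !scalerA.
rewrite (fsetU1D1 _ pq) (sg_fsetD1 p qS) (sg_fsetU1 q.+1 pS) -scalerDl.
rewrite [_ + _](_ : _ = 0) ?scale0r //.
case: (ltngtP p q.+1) => h; last by move/eqP: pq.
all: by rewrite /= ?expr1 ?expr0; ring.
Qed.

Lemma phiB_anticomm_neg q q' S :
  phi (Negz q) (phiB R (Negz q') S) + phi (Negz q') (phiB R (Negz q) S) = 0.
Proof.
case: (boolP (q.+1 \in S)) => qS; last first.
  rewrite (phiB_annihilate_eq0 qS) linear0 addr0.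
  case: (boolP (q'.+1 \in S)) => q'S; last by rewrite (phiB_annihilate_eq0 q'S) linear0.
  by rewrite (phiB_annihilate q'S) phiUZ phiB_annihilate_eq0 ?scaler0 // !inE (negbTE qS) andbF.
case: (boolP (q'.+1 \in S)) => q'S; last first.
  rewrite (phiB_annihilate_eq0 q'S) linear0 add0r (phiB_annihilate qS) phiUZ.
  by rewrite phiB_annihilate_eq0 ?scaler0 // !inE (negbTE q'S) andbF.
case: (eqVneq q q') => [<-|qq'].
  by rewrite (phiB_annihilate qS) phiUZ phiB_annihilate_eq0 ?fsetD11 // scaler0 addr0.
have qSq' : q.+1 \in (S `\ q'.+1)%fset by rewrite !inE qS eqSS qq'.
have q'Sq : q'.+1 \in (S `\ q.+1)%fset by rewrite !inE q'S eqSS eq_sym qq'.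
rewrite (phiB_annihilate qS) (phiB_annihilate q'S) !phiUZ.
rewrite (phiB_annihilate qSq') (phiB_annihilate q'Sq) !scalerA fsetD1C.
rewrite (sg_fsetD1 q.+1 q'S) (sg_fsetD1 q'.+1 qS) -scalerDl.
rewrite [_ + _](_ : _ = 0) ?scale0r //.
rewrite !ltnS; case: (ltngtP q q') => h; last by move/eqP: qq'.
all: by rewrite /= ?expr1 ?expr0; ring.
Qed.

Lemma phiB_anticomm i j S :
  phi i (phiB R j S) + phi j (phiB R i S) = acomm i j *: << S >>.
Proof.
case: i => [p|q]; case: j => [p'|q'].
- case: (eqVneq p p') => [<-|pp']; first by rewrite -mulr2n phiB_anticomm_same.
  by rewrite phiB_anticomm_pos // acomm_eq0 ?scale0r //; lia.
- case: (eqVneq p q'.+1) => [->|pq'].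
    by rewrite phiB_anticomm_pos_neg_eq /acomm NegzE subrr.
  by rewrite phiB_anticomm_pos_neg // acomm_eq0 ?scale0r // NegzE; lia.
- rewrite addrC; case: (eqVneq p' q.+1) => [->|p'q].
    by rewrite phiB_anticomm_pos_neg_eq /acomm NegzE addrC subrr.
  by rewrite phiB_anticomm_pos_neg // acomm_eq0 ?scale0r // NegzE; lia.
by rewrite phiB_anticomm_neg acomm_eq0 ?scale0r // !NegzE; lia.
Qed.

Lemma phi_anticomm i j (v : fock R) :
  phi i (phi j v) + phi j (phi i v) = acomm i j *: v.
Proof.
have phi_phi k k' : phi k (phi k' v) = \sum_(S <- msupp v) v@_S *: phi k (phiB R k' S).
  by rewrite [phi k' v]/phi linear_sum; apply: eq_bigr => S _; rewrite linearZ.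
rewrite !phi_phi -big_split [in RHS](monalgE v) scaler_sumr /=.
apply: eq_bigr => S _; rewrite -scalerDr phiB_anticomm scalerA mulrC -scalerA.
by congr (_ *: _); apply/malgP => k; rewrite mcoeffZ !mcoeffU; case: eqP; rewrite ?mulr1 ?mulr0.
Qed.

End BasisAction.

Arguments acomm {R} i j.

Section NormalOrdering.
Variable R : numFieldType.
Implicit Types (v : fock R) (i j n : int).

(* Unlike a bound on the support of v, this is preserved by every phi n with |n| < B,
   through the anticommutation relation. *)
Definition annihilated_beyond (B : nat) v :=
  forall i, i < 0 -> (B <= `|i|)%N -> phi i v = 0.

Lemma annihilated_beyond_exists v (m : nat) :
  exists2 B, annihilated_beyond B v & (m < B)%N.
Proof.
exists (maxn m.+1 (\max_(S <- msupp v) \max_(s <- S) s.+1)); last exact: leq_maxl.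
case=> // q _ /=; rewrite geq_max => /andP[_ qB].
rewrite /phi big_seq big1 // => S vS; rewrite phiB_annihilate_eq0 ?scaler0 //.
apply: contraTN qB => qS; rewrite -ltnNge.
apply: leq_trans (@leq_bigmax_seq _ (enum_fset (msupp v)) xpredT _ S vS isT).
exact: (@leq_bigmax_seq _ (enum_fset S) xpredT _ _ qS isT).
Qed.

Lemma annihilated_beyond_vac : annihilated_beyond 0 (vac R).
Proof. by case=> // q _ _; rewrite phiU phiB_annihilate_eq0. Qed.

Lemma annihilated_beyond_phi B n v : annihilated_beyond B v -> (`|n| < B)%N ->
  annihilated_beyond B (phi n v).
Proof.
move=> vB nB i i0 iB; have in0 : i + n != 0 by lia.
by move: (phi_anticomm i n v); rewrite (vB i) // linear0 addr0 acomm_eq0 ?scale0r.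
Qed.

Lemma nord_annihilated_right B v i j : annihilated_beyond B v ->
  i < 0 -> (B <= `|i|)%N -> nord j i v = 0.
Proof.
move=> vB i0 iB; rewrite /nord /vev (vB i) // (annihilated_beyond_vac i0) // !linear0.
by rewrite mcoeff0 scale0r subr0.
Qed.

Lemma nord_annihilated_left B v i j : annihilated_beyond B v ->
  j < 0 -> (B <= `|j|)%N -> nord j i v = 0.
Proof.
move=> vB j0 jB.
have phi_phi (w : fock R) : phi j w = 0 -> phi j (phi i w) = acomm j i *: w.
  by move=> jw; rewrite -(phi_anticomm j i w) jw linear0 addr0.
rewrite /nord /vev !phi_phi ?vB ?annihilated_beyond_vac //.
by rewrite mcoeffZ /vac mcoeffUU mulr1 subrr.
Qed.

Lemma nord_phi_comm n i j v :
  nord j i (phi n v) =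
  phi n (nord j i v) + (acomm i n *: phi j v - acomm j n *: phi i v).
Proof.
have swap k (w : fock R) : phi k (phi n w) = acomm k n *: w - phi n (phi k w).
  by rewrite -(phi_anticomm k n w) addrK.
rewrite /nord phi_sub phiZ swap phi_sub phiZ swap.
by rewrite opprB [RHS]addrC addrACA !addrA.
Qed.

End NormalOrdering.

Section Coefficients.
Variable R : numFieldType.
Implicit Types (l : winf R) (i j n : int).

Definition wdeg l : nat := \max_(x <- l) absz x.1.2.

Lemma wdeg_shiftF l x i n : x \in l -> (wdeg l < `|n - i|)%N -> (n == i + x.1.2) = false.
Proof.
move=> xl deg_ni; have xdeg : (absz x.1.2 <= wdeg l)%N.
  exact: (@leq_bigmax_seq _ l xpredT (fun x : R * int * nat => absz x.1.2) x xl isT).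
by apply/eqP => nE; move: deg_ni; rewrite nE; lia.
Qed.

Lemma wact_eq0 l i n : (wdeg l < `|n - i|)%N -> wact l i n = 0.
Proof.
move=> deg_ni; rewrite /wact big_seq big1 // => x xl.
by rewrite (wdeg_shiftF xl deg_ni) mulr0 mul0r.
Qed.

Lemma iota_act_eq0 l i n : (wdeg l < `|n - i|)%N -> iota_act l i n = 0.
Proof.
move=> deg_ni; rewrite /iota_act big_seq big1 // => x xl.
by rewrite (wdeg_shiftF xl deg_ni) mulr0 mul0r.
Qed.

Definition hatB_coef l i j : R := (-1) ^+ `|j| * wact l i (- j).

Lemma hatB_coef_eq0 l i j : (wdeg l < absz (i + j)%R)%N -> hatB_coef l i j = 0.
Proof. by move=> deg_ij; rewrite /hatB_coef wact_eq0 ?mulr0 //; lia. Qed.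

(* The matrix of iota(l_z) is, up to signs, the transpose of that of l_z through
   z^i <-> z^(-i). *)
Lemma iota_actE l i n : iota_act l i n = hatB_coef l (- n) i * (-1) ^+ `|n|.
Proof.
rewrite /hatB_coef /wact /iota_act mulr_sumr mulr_suml; apply: eq_bigr => -[[c k] m] _ /=.
have -> : (- i == - n + k) = (n == i + k) by apply/eqP/eqP; lia.
case: eqP => [->|_]; last by rewrite !(mulr0, mul0r).
rewrite intrN signr_absD !mulr1 [RHS]mulrACA signr_sq mul1r -mulrA.
by congr (_ * _); rewrite mulrC.
Qed.

Section Collapse.
Variables (V : lmodType R) (N : nat) (n : int).
Hypothesis nN : (`|n| <= N)%N.

Lemma big_zrange_acomm (y : int -> V) :
  \sum_(i <- zrange N) acomm i n *: y i = (-1) ^+ `|n| *: y (- n).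
Proof.
rewrite (bigD1_seq (- n)) ?mem_zrange ?abszN ?zrange_uniq //= big1 ?addr0.
  by rewrite /acomm addNr eqxx abszN.
by move=> i ni; rewrite acomm_eq0 ?scale0r // addr_eq0.
Qed.

Lemma sum_hatB_acomm_left l (x : int -> V) :
  \sum_(i <- zrange N) \sum_(j <- zrange N) hatB_coef l i j *: (acomm i n *: x j) =
  \sum_(j <- zrange N) iota_act l j n *: x j.
Proof.
rewrite exchange_big; apply: eq_bigr => j _.
under eq_bigr do rewrite scalerA mulrC -scalerA.
by rewrite big_zrange_acomm scalerA mulrC iota_actE.
Qed.

Lemma sum_hatB_acomm_right l (x : int -> V) :
  \sum_(i <- zrange N) \sum_(j <- zrange N) hatB_coef l i j *: (acomm j n *: x i) =
  \sum_(i <- zrange N) wact l i n *: x i.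
Proof.
apply: eq_bigr => i _; under eq_bigr do rewrite scalerA mulrC -scalerA.
by rewrite big_zrange_acomm scalerA /hatB_coef abszN opprK mulrA signr_sq mul1r.
Qed.

Lemma sum_hatB_acomm l (x : int -> V) :
  \sum_(i <- zrange N) \sum_(j <- zrange N)
     hatB_coef l i j *: (acomm i n *: x j - acomm j n *: x i) =
  - \sum_(i <- zrange N) (wact l i n - iota_act l i n) *: x i.
Proof.
under eq_bigr do under eq_bigr do rewrite scalerBr.
under eq_bigr do rewrite sumrB.
rewrite sumrB sum_hatB_acomm_left sum_hatB_acomm_right -sumrB -sumrN.
by apply: eq_bigr => i _; rewrite scalerBl opprB.
Qed.

End Collapse.
End Coefficients.

Section Truncation.
Variables (R : numFieldType) (l : winf R).
Implicit Types (v : fock R) (n : int).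

Lemma hatB_zrange B N v : annihilated_beyond B v -> (B + wdeg l <= N)%N ->
  hatB l v = 2^-1 *: \sum_(i <- zrange N) \sum_(j <- zrange N) hatB_coef l i j *: nord j i v.
Proof.
move=> vB BN.
have term_eq0 i j : (N < `|i|)%N \/ (N < `|j|)%N -> hatB_coef l i j *: nord j i v = 0.
  move=> ij; case: (leqP (absz (i + j)%R) (wdeg l)) => deg; last first.
    by rewrite hatB_coef_eq0 ?scale0r.
  have [[i0 iB]|[j0 jB]] : (i < 0 /\ (B <= `|i|)%N) \/ (j < 0 /\ (B <= `|j|)%N) by lia.
    by rewrite (nord_annihilated_right _ vB i0 iB) scaler0.
  by rewrite (nord_annihilated_left _ vB j0 jB) scaler0.
have inner i : zsum (fun j => hatB_coef l i j *: nord j i v) =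
               \sum_(j <- zrange N) hatB_coef l i j *: nord j i v.
  by apply: zsum_zrange (leqnn N) => j Nj; apply: term_eq0; right.
rewrite /hatB (zsum_zrange _ (leqnn N)) => [|i Ni].
  by congr (_ *: _); apply: eq_bigr => i _; apply: inner.
by rewrite inner big1 // => j _; apply: term_eq0; left.
Qed.

Lemma rhs_zrange N n v : (wdeg l + `|n| <= N)%N ->
  rhs l n v = - (2^-1 *: \sum_(i <- zrange N) (wact l i n - iota_act l i n) *: phi i v).
Proof.
move=> lnN; rewrite /rhs (zsum_zrange _ (leqnn N)) // => i Ni.
by rewrite wact_eq0 ?iota_act_eq0 ?subrr ?scale0r //; lia.
Qed.

Lemma sum_nord_phi_comm (c : int -> int -> R) (r : seq int) n v :
  \sum_(i <- r) \sum_(j <- r) c i j *: nord j i (phi n v) -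
    phi n (\sum_(i <- r) \sum_(j <- r) c i j *: nord j i v) =
  \sum_(i <- r) \sum_(j <- r) c i j *: (acomm i n *: phi j v - acomm j n *: phi i v).
Proof.
rewrite phi_sum -sumrB; apply: eq_bigr => i _.
rewrite phi_sum -sumrB; apply: eq_bigr => j _.
by rewrite phiZ nord_phi_comm scalerDr addrC addKr.
Qed.

End Truncation.

Theorem lemma3p3 (R : numFieldType) (l : winf R) (n : int) (v : fock R) :
  comm (hatB l) (phi n) v = rhs l n v.
Proof.
have [B vB nB] := annihilated_beyond_exists v `|n|.
rewrite /comm (hatB_zrange (annihilated_beyond_phi vB nB) (leqnn _)).
rewrite (hatB_zrange vB (leqnn _)).
rewrite phiZ -scalerBr sum_nord_phi_comm sum_hatB_acomm; last lia.
by rewrite (rhs_zrange _ _ (N := B + wdeg l)) ?scalerN //; lia.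
Qed.
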